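(* Let $A$ be a commutative ring whose nilradical $N$ is a prime ideal. Let $E$ be a non-zero $A$-module and $R=A\propto E$ the trivial ring extension of $A$ by $E$. The following are equivalent: (1) $R$ is Hermite; (2) $R$ is B\'ezout; (3) $A$ is B\'ezout, $A_P$ is a domain for each $P\in\mathrm{Supp}(E)$, $E$ is FP-injective and all finitely generated submodules of $E$ are cyclic.
   Context: All rings are commutative with identity. The trivial ring extension $R=A\propto E$ is the ring with underlying group $A\times E$ and multiplication $(a,e)(a',e')=(aa',ae'+a'e)$. A ring is B\'ezout if every finitely generated ideal is principal. A ring $R$ is Hermite if for every $a,b\in R$ there exist $d,a',b'\in R$ with $a=da'$, $b=db'$ and $Ra'+Rb'=R$. A module $E$ is FP-injective if $\mathrm{Ext}^1(F,E)=0$ for every finitely presented module $F$. $\mathrm{Supp}(E)=\{P \text{ prime}: E_P\neq 0\}$. *)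

From HB Require Import structures.
From mathcomp Require Import all_boot all_order all_algebra.
Set Implicit Arguments. Unset Strict Implicit. Unset Printing Implicit Defensive.
Import GRing.Theory.
Local Open Scope ring_scope.

Section TrivExt.
Variables (A : comNzRingType) (E : lmodType A).

Definition triv_ext : Type := (A * E)%type.
HB.instance Definition _ := GRing.Zmodule.on triv_ext.

Definition te_one : triv_ext := (1, 0).
Definition te_mul (x y : triv_ext) : triv_ext :=
  (x.1 * y.1, x.1 *: y.2 + y.1 *: x.2).

Lemma te_mulA : associative te_mul.
Proof.
case=> a e [b f] [c g]; rewrite /te_mul /= mulrA; congr pair.
by rewrite !scalerDr !scalerA [c * a]mulrC [c * b]mulrC addrA.
Qed.

Lemma te_mulC : commutative te_mul.
Proof. by case=> a e [b f]; rewrite /te_mul /= mulrC addrC. Qed.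

Lemma te_mul1 : left_id te_one te_mul.
Proof. by case=> a e; rewrite /te_mul /= mul1r scale1r scaler0 addr0. Qed.

Lemma te_mulDl : left_distributive te_mul +%R.
Proof.
case=> a e [b f] [c g]; rewrite /te_mul /=; congr pair; first by rewrite mulrDl.
by rewrite scalerDl scalerDr addrACA.
Qed.

Lemma te_one_neq0 : te_one != 0.
Proof. by apply/eqP => -[] /eqP; rewrite oner_eq0. Qed.

HB.instance Definition _ := GRing.Zmodule_isComNzRing.Build triv_ext
  te_mulA te_mulC te_mul1 te_mulDl te_one_neq0.
End TrivExt.

Definition in_ideal_gen (R : comNzRingType) (s : seq R) (x : R) : Prop :=
  exists c : 'I_(size s) -> R, x = \sum_(i < size s) c i * s`_i.

Definition Bezout (R : comNzRingType) : Prop :=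
  forall s : seq R, exists d : R,
    forall x : R, in_ideal_gen s x <-> exists r : R, x = r * d.

Definition Hermite (R : comNzRingType) : Prop :=
  forall a b : R, exists d a' b' : R,
    [/\ a = d * a', b = d * b' & exists u v : R, u * a' + v * b' = 1].

Definition is_nilpotent (R : comNzRingType) (x : R) : Prop :=
  exists n : nat, x ^+ n = 0.

Definition prime_ideal (R : comNzRingType) (P : R -> Prop) : Prop :=
  [/\ P 0, (forall x y, P x -> P y -> P (x + y)),
      (forall r x, P x -> P (r * x)), ~ P 1 &
      (forall x y, P (x * y) -> P x \/ P y)].

Definition nilradical (R : comNzRingType) : R -> Prop := @is_nilpotent R.

(* Localizations at a prime P, presented as fractions a/s (s \notin P) *)
(* modulo the usual equivalence relation.                             *)
Section Loc.
Variables (A : comNzRingType) (P : A -> Prop).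

Definition loc_frac (x : A * A) : Prop := ~ P x.2.
Definition loc_eq (x y : A * A) : Prop :=
  exists u : A, ~ P u /\ u * (x.1 * y.2 - y.1 * x.2) = 0.
Definition loc_mul (x y : A * A) : A * A := (x.1 * y.1, x.2 * y.2).
Definition loc_zero : A * A := (0, 1).
Definition loc_one : A * A := (1, 1).

Definition loc_is_domain : Prop :=
  ~ loc_eq loc_one loc_zero /\
  forall x y, loc_frac x -> loc_frac y ->
    loc_eq (loc_mul x y) loc_zero -> loc_eq x loc_zero \/ loc_eq y loc_zero.

Variable (E : lmodType A).
(* E_P: pairs (e, s) with s \notin P modulo (e,s) ~ (f,t) iff u(te - sf) = 0 *)
Definition locm_eq (x y : E * A) : Prop :=
  exists u : A, ~ P u /\ u *: (y.2 *: x.1 - x.2 *: y.1) = 0.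
Definition locm_nonzero : Prop :=
  exists x : E * A, ~ P x.2 /\ ~ locm_eq x (0, 1).
End Loc.

Definition in_Supp (A : comNzRingType) (E : lmodType A) (P : A -> Prop) : Prop :=
  prime_ideal P /\ locm_nonzero P E.

(* FP-injective modules: every homomorphism  *)
(* from a finitely generated submodule K of A^n into E extends to A^n. *)
(* K is generated by the rows of the m x n matrix K; a homomorphism   *)
(* K -> E is given by images e_i of the generators respecting all     *)
(* relations; an extension to A^n is given by images x_j of the basis. *)
Definition FP_injective (A : comNzRingType) (E : lmodType A) : Prop :=
  forall (m n : nat) (K : 'M[A]_(m, n)) (e : 'I_m -> E),
    (forall c : 'I_m -> A,
        (forall j : 'I_n, \sum_(i < m) c i * K i j = 0) ->
        \sum_(i < m) c i *: e i = 0) ->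
    exists x : 'I_n -> E, forall i : 'I_m, \sum_(j < n) K i j *: x j = e i.

Definition in_submod_gen (A : comNzRingType) (E : lmodType A) (s : seq E) (x : E) : Prop :=
  exists c : 'I_(size s) -> A, x = \sum_(i < size s) c i *: s`_i.

Definition fg_submods_cyclic (A : comNzRingType) (E : lmodType A) : Prop :=
  forall s : seq E, exists e : E,
    forall x : E, in_submod_gen s x <-> exists a : A, x = a *: e.

From HB Require Import structures.
From mathcomp Require Import all_boot all_order all_algebra.
From mathcomp Require Import ring.
From mathcomp Require classical_sets.
From Stdlib Require Import Classical.
Set Implicit Arguments. Unset Strict Implicit.
Import GRing.Theory.
Local Open Scope ring_scope.

(* The nilradical of R = A ∝ E is N ∝ E, so it is prime together with the nilradical N of
   A, and a Bezout ring with prime nilradical is Hermite: writing a = a1 d, b = b1 d with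
   a1, b1 not both nilpotent, a gcd g = u a1 + v b1 of a1 and b1 is not nilpotent and kills
   the defect 1 - u a2 - v b2 of its cofactors, which is therefore nilpotent, so that
   u a2 + v b2 is a unit.
   Whether R is Bezout is governed by two properties of E: Ann(a) + Ann(x) = A for nilpotent
   a and x in E, and divisibility of E by every non-nilpotent element. The first says that a/1
   vanishes in A_P for P in Supp E, i.e. that these A_P are domains. Given the first, the
   second is FP-injectivity applied to the equation d y = x; conversely both together make
   every compatible finite linear system over the Bezout ring A solvable, clearing one column
   at a time with the gcd of its entries. A gcd of (a, e) and (b, f) in R is (d, 0) when the
   gcd d of a and b is not nilpotent, and (d, g) with g a generator of <e, f> when a and b are
   nilpotent. *)

Section CyclicSubmodules.
Variables (A : comNzRingType) (M : lmodType A).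

Definition pairs_cyclic : Prop :=
  forall e f : M, exists g : M, (exists u v : A, g = u *: e + v *: f) /\
    (exists p, e = p *: g) /\ (exists q, f = q *: g).

Lemma fg_submods_cyclicP : fg_submods_cyclic M <-> pairs_cyclic.
Proof.
split=> [cycM a b | pairsM].
  have [d gen_d] := cycM [:: a; b].
  have [c ec] : in_submod_gen [:: a; b] d by apply/gen_d; exists 1; rewrite scale1r.
  exists d; split.
    by exists (c ord0), (c (lift ord0 ord0)); rewrite ec !big_ord_recl big_ord0 addr0.
  split; apply/gen_d.
    exists (fun k => if val k == 0%N then 1 else 0).
    by rewrite /= !big_ord_recl big_ord0 /= scale1r scale0r !addr0.
  exists (fun k => if val k == 1%N then 1 else 0).
  by rewrite /= !big_ord_recl big_ord0 /= scale1r scale0r addr0 add0r.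
elim=> [|a s [d gen_d]].
  exists 0 => x; split; first by case=> c ->; exists 0; rewrite big_ord0 scaler0.
  by case=> r ->; exists (fun _ => 0); rewrite big_ord0 scaler0.
have [g [[u [v ->]] [[p ea] [q ed]]]] := pairsM a d.
exists (u *: a + v *: d) => x; split.
  case=> c; rewrite big_ord_recl /= => ->.
  have [r ->] : exists r, \sum_(i < size s) c (lift ord0 i) *: s`_i = r *: d.
    by apply/gen_d; exists (fun i => c (lift ord0 i)).
  by exists (c ord0 * p + r * q); rewrite scalerDl -!scalerA -ea -ed.
case=> r ->.
have [c' ec'] : in_submod_gen s d by apply/gen_d; exists 1; rewrite scale1r.
exists (fun k => if unlift ord0 k is Some i then r * v * c' i else r * u).
rewrite big_ord_recl /= unlift_none.
under eq_bigr => i _ do rewrite liftK.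
rewrite ec' scalerDr !scalerA scaler_sumr; congr (_ + _).
by apply: eq_bigr => i _; rewrite scalerA.
Qed.

End CyclicSubmodules.

Definition principal_pair (R : comNzRingType) (a b : R) : Prop :=
  exists d : R, (exists u v : R, d = u * a + v * b) /\
    (exists p, a = p * d) /\ (exists q, b = q * d).

Definition bezout_pairs (R : comNzRingType) : Prop := forall a b : R, principal_pair a b.

Lemma BezoutP (R : comNzRingType) : Bezout R <-> bezout_pairs R.
Proof. exact: fg_submods_cyclicP R^o. Qed.

Section Nilpotents.
Variable R : comNzRingType.

Lemma nil0 : nilradical (0 : R).
Proof. by exists 1%N; rewrite expr1. Qed.

Lemma nil1 : ~ nilradical (1 : R).
Proof. by case=> n /eqP; rewrite expr1n oner_eq0. Qed.

Lemma nilMl (r x : R) : nilradical x -> nilradical (r * x).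
Proof. by case=> n xn; exists n; rewrite exprMn xn mulr0. Qed.

Lemma nil_in_prime (P : R -> Prop) (x : R) : prime_ideal P -> nilradical x -> P x.
Proof.
case=> P0 _ _ notP1 Pprime [n xn].
have : P (x ^+ n) by rewrite xn.
elim: n {xn} => [|n IHn]; first by rewrite expr0.
by rewrite exprS => /Pprime [].
Qed.

Lemma unit_1subr_nil (s : R) : nilradical s -> exists w : R, (1 - s) * w = 1.
Proof.
case=> n sn; exists (\sum_(k < n) s ^+ k).
by rewrite -opprB mulNr -subrX1 sn sub0r opprK.
Qed.

Hypothesis nil_prime : prime_ideal (@nilradical R).

Lemma nilD (x y : R) : nilradical x -> nilradical y -> nilradical (x + y).
Proof. by case: nil_prime => _ + _ _ _; apply. Qed.

Lemma nilN (x : R) : nilradical x -> nilradical (- x).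
Proof. by rewrite -mulN1r; apply: nilMl. Qed.

Lemma nilB (x y : R) : nilradical x -> nilradical y -> nilradical (x - y).
Proof. by move=> nx /nilN; apply: nilD. Qed.

Lemma nilM_or (x y : R) : nilradical (x * y) -> nilradical x \/ nilradical y.
Proof. by case: nil_prime => _ _ _ _; apply. Qed.

End Nilpotents.

Lemma bezout_pairs_of_Hermite (R : comNzRingType) : Hermite R -> bezout_pairs R.
Proof.
move=> hermR a b; have [d [a' [b' [-> -> [u [v e]]]]]] := hermR a b.
exists d; split; last by split; [exists a' | exists b']; rewrite mulrC.
by exists u, v; rewrite -[d in LHS]mulr1 -e; ring.
Qed.

Lemma bezout_cofactors_defect (R : comNzRingType) (a b d u v p q : R) :
  d = u * a + v * b -> a = p * d -> b = q * d -> d * (1 - u * p - v * q) = 0.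
Proof.
move=> ed ea eb.
have -> : d * (1 - u * p - v * q) = d - u * (p * d) - v * (q * d) by ring.
by rewrite -ea -eb {1}ed; ring.
Qed.

Section HermiteOfBezout.
Variable R : comNzRingType.
Hypotheses (nil_prime : prime_ideal (@nilradical R)) (bezR : bezout_pairs R).

Lemma bezout_nonnil_cofactors (a b : R) : exists d a1 b1 : R,
  [/\ a = a1 * d, b = b1 * d & ~ (nilradical a1 /\ nilradical b1)].
Proof.
have [d [[u [v ed]] [[p ea] [q eb]]]] := bezR a b.
have defect0 := bezout_cofactors_defect ed ea eb.
have [[np nq]|] := classic (nilradical p /\ nilradical q); last by exists d, p, q.
pose t := 1 - u * p - v * q.
have nt : ~ nilradical t.
  move=> nt; apply: (@nil1 R); have -> : 1 = t + (u * p + v * q) by rewrite /t; ring.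
  by apply: nilD => //; apply: nilD => //; apply: nilMl.
exists d, (p + t), q; split=> //; first by rewrite mulrDl [t * d]mulrC /t defect0 addr0 -ea.
by case=> /(nilB nil_prime)/(_ np); rewrite addrAC subrr add0r.
Qed.

Lemma Hermite_of_bezout_pairs : Hermite R.
Proof.
move=> a b; have [d [a1 [b1 [-> -> nab]]]] := bezout_nonnil_cofactors a b.
have [g [[u [v eg]] [[a2 ea2] [b2 eb2]]]] := bezR a1 b1.
have ng : ~ nilradical g.
  by move=> ng; apply: nab; rewrite ea2 eb2; split; apply: nilMl.
have ns : nilradical (1 - u * a2 - v * b2).
  have : nilradical (g * (1 - u * a2 - v * b2)).
    by rewrite (bezout_cofactors_defect eg ea2 eb2); apply: nil0.
  by case/(nilM_or nil_prime).
have [w ew] := unit_1subr_nil ns.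
exists (d * g), a2, b2; split; rewrite ?ea2 ?eb2; try ring.
by exists (w * u), (w * v); rewrite -ew; ring.
Qed.

End HermiteOfBezout.

Section TrivialExtension.
Variables (A : comNzRingType) (E : lmodType A).
Local Notation R := (triv_ext E).

Lemma teM (x y : R) : x * y = (x.1 * y.1, x.1 *: y.2 + y.1 *: x.2) :> A * E.
Proof. by []. Qed.

Lemma teD (x y : R) : x + y = (x.1 + y.1, x.2 + y.2) :> A * E.
Proof. by []. Qed.

Lemma teX1 (x : R) n : (x ^+ n).1 = x.1 ^+ n.
Proof. by elim: n => [|n IHn]; rewrite ?expr0 // !exprS teM /= IHn. Qed.

Lemma teX2 (x : R) n : (x ^+ n.+1).2 = x.1 ^+ n *: (x.2 *+ n.+1).
Proof.
elim: n => [|n IHn]; first by rewrite expr1 expr0 scale1r.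
by rewrite exprS teM /= IHn teX1 scalerA -exprS -scalerDr [in RHS]mulrS addrC.
Qed.

Lemma nil_te (x : R) : nilradical x <-> nilradical x.1.
Proof.
split=> -[n xn]; first by exists n; rewrite -teX1 xn.
exists n.+1; case def_xn : (x ^+ n.+1) => [a e].
have := teX2 x n; have := teX1 x n.+1.
by rewrite def_xn /= exprS xn mulr0 scale0r => -> ->.
Qed.

Lemma prime_nil_te : prime_ideal (@nilradical A) -> prime_ideal (@nilradical R).
Proof.
case=> nil0A nilDA nilMA nil1A nilM_orA; split.
- exact/nil_te.
- by move=> x y /nil_te nx /nil_te ny; apply/nil_te; apply: nilDA.
- by move=> r x /nil_te nx; apply/nil_te; apply: nilMA.
- by move/nil_te.
- by move=> x y /nil_te /nilM_orA [] /nil_te; [left | right].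
Qed.

End TrivialExtension.

Definition proper_ideal (R : comNzRingType) (I : R -> Prop) : Prop :=
  [/\ I 0, (forall x y, I x -> I y -> I (x + y)),
      (forall r x, I x -> I (r * x)) & ~ I 1].

Section PrimeIdealAbove.
Variables (R : comNzRingType) (I : R -> Prop).
Hypothesis I_proper : proper_ideal I.

(* The empty set is admitted so that the union of the empty chain is a candidate. *)
Definition empty_or_ideal_above (X : R -> Prop) : Prop :=
  [/\ ~ X 1, (forall x y, X x -> X y -> X (x + y)),
      (forall r x, X x -> X (r * x)) & (exists y, X y) -> forall y, I y -> X y].

Section Maximal.
Variable M : R -> Prop.
Hypotheses (M_cand : empty_or_ideal_above M)
  (M_max : forall B, (forall x, M x -> B x) -> ~ (forall x, B x -> M x) ->
                     ~ empty_or_ideal_above B).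

Lemma maximal_above : forall x, I x -> M x.
Proof.
case: I_proper M_cand => I0 _ _ notI1 [_ _ _]; apply; apply: NNPP => M_empty.
apply: (M_max (B := I)); first by move=> x Mx; case: M_empty; exists x.
  by move/(_ 0 I0) => M0; apply: M_empty; exists 0.
by case: I_proper => *; split.
Qed.

Lemma maximal_comax (x : R) : ~ M x -> exists m r, M m /\ 1 = m + r * x.
Proof.
case: M_cand => notM1 MD MM _ notMx; apply: NNPP => not_comax.
pose B z := exists m r, M m /\ z = m + r * x.
apply: (M_max (B := B)).
- by move=> m Mm; exists m, 0; rewrite mul0r addr0.
- move/(_ x) => BM; apply/notMx/BM; exists 0, 1; rewrite add0r mul1r; split=> //.
  by case: I_proper => I0 _ _ _; apply: maximal_above.
split.
- by case=> m [r [Mm e]]; apply: not_comax; exists m, r.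
- move=> _ _ [m [r [Mm ->]]] [m' [r' [Mm' ->]]].
  exists (m + m'), (r + r'); split; first exact: MD.
  by rewrite mulrDl addrACA.
- move=> s _ [m [r [Mm ->]]]; exists (s * m), (s * r); split; first exact: MM.
  by rewrite mulrDr mulrA.
- by move=> _ y Iy; exists y, 0; rewrite mul0r addr0; split=> //; apply: maximal_above.
Qed.

Lemma maximal_prime : prime_ideal M.
Proof.
have M0 : M 0 by case: I_proper => I0 _ _ _; apply: maximal_above.
case: M_cand => notM1 MD MM _; split=> // x y Mxy; apply: NNPP.
move=> /not_or_and [/maximal_comax [m1 [r1 [Mm1 e1]]] /maximal_comax [m2 [r2 [Mm2 e2]]]].
apply: notM1; have -> : 1 = m1 * (m2 + r2 * y) + r1 * x * m2 + r1 * r2 * (x * y).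
  by rewrite -[1]mulr1 {1}e1 e2; ring.
apply: (MD); last exact: MM.
by apply: (MD); [rewrite mulrC |]; apply: MM.
Qed.

End Maximal.

Lemma prime_ideal_above : exists P, prime_ideal P /\ forall x, I x -> P x.
Proof.
have [F F_cand F_total | M [M_cand M_max]] := @classical_sets.Zorn_bigcup R empty_or_ideal_above.
  split.
  - by case=> X /F_cand[].
  - move=> x y [X FX Xx] [Y FY Yy].
    have [XY|YX] := F_total X Y FX FY.
      by exists Y => //; case: (F_cand Y FY) => _ + _ _; apply=> //; apply: XY.
    by exists X => //; case: (F_cand X FX) => _ + _ _; apply=> //; apply: YX.
  - by move=> r x [X FX Xx]; exists X => //; case: (F_cand X FX) => _ _ + _; apply.
  - move=> [y [X FX Xy]] z Iz; exists X => //.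
    by case: (F_cand X FX) => _ _ _; apply=> //; exists y.
have M_max' B : (forall x, M x -> B x) -> ~ (forall x, B x -> M x) ->
    ~ empty_or_ideal_above B by move=> MB BM; apply: M_max.
by exists M; split; [exact: maximal_prime M_max' | exact: maximal_above M_max'].
Qed.

End PrimeIdealAbove.

Section LocalizationFacts.
Variables (A : comNzRingType) (E : lmodType A) (P : A -> Prop).

Lemma loc_eq0P (x : A * A) :
  loc_eq P x (loc_zero A) <-> exists u, ~ P u /\ u * x.1 = 0.
Proof. by split=> -[u [nu eu]]; exists u; move: eu; rewrite /= mulr1 mul0r subr0. Qed.

Lemma locm_eq0P (x : E * A) :
  locm_eq P x (0, 1) <-> exists u, ~ P u /\ u *: x.1 = 0.
Proof. by split=> -[u [nu eu]]; exists u; move: eu; rewrite /= scale1r scaler0 subr0. Qed.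

Lemma loc_domain_nil_eq0 (a : A) :
  ~ P 1 -> loc_is_domain P -> nilradical a -> loc_eq P (a, 1) (loc_zero A).
Proof.
move=> notP1 [one_neq0 domP] [n an].
have : loc_eq P (a ^+ n, 1) (loc_zero A) by apply/loc_eq0P; exists 1; rewrite an mulr0.
elim: n {an} => [|n IHn]; first by rewrite expr0.
move=> /loc_eq0P an0; have /(domP (a, 1) (a ^+ n, 1) notP1 notP1) :
  loc_eq P (loc_mul (a, 1) (a ^+ n, 1)) (loc_zero A) by apply/loc_eq0P; rewrite /= -exprS.
by case=> // /IHn.
Qed.

End LocalizationFacts.

Section AnnihilatorCondition.
Variables (A : comNzRingType) (E : lmodType A).

Definition nil_ann_comax : Prop :=
  forall a : A, nilradical a -> forall x : E, exists s, s * a = 0 /\ s *: x = x.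

Definition nonnil_divisible : Prop :=
  forall d : A, ~ nilradical d -> forall x : E, exists y, x = d *: y.

Lemma nil_scale0 : nil_ann_comax -> forall a : A, nilradical a -> forall x : E, a *: x = 0.
Proof.
by move=> comax a na x; have [s [sa <-]] := comax a na x; rewrite scalerA mulrC sa scale0r.
Qed.

Lemma nil_ann_comax_family : nil_ann_comax -> forall a : A, nilradical a ->
  forall m (e : 'I_m -> E), exists s, s * a = 0 /\ forall i, s *: e i = e i.
Proof.
move=> comax a na; elim=> [|m IHm] e; first by exists 0; split; [rewrite mul0r | case].
have [s2 [s2a s2e]] := IHm (fun i => e (lift ord0 i)).
have [s1 [s1a s1e]] := comax a na (e ord0).
exists (s1 + s2 - s1 * s2); split.
  by rewrite !mulrBl !mulrDl -mulrA s2a s1a mulr0 !addr0 subr0.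
move=> i; rewrite scalerBl scalerDl -scalerA.
have [j ->|->] := unliftP ord0 i; first by rewrite s2e addrAC subrr add0r.
by rewrite scalerA mulrC -scalerA s1e addrK.
Qed.

Hypothesis nil_prime : prime_ideal (@nilradical A).

Lemma loc_domain_of_nil_ann_comax (P : A -> Prop) :
  nil_ann_comax -> in_Supp E P -> loc_is_domain P.
Proof.
move=> comax [Pprime [[z s0] [_ z_neq0]]].
have [P0 PD _ notP1 _] := Pprime.
have nil_eq0 t s : nilradical t -> loc_eq P (t, s) (loc_zero A).
  move=> nt; have [u [ut uz]] := comax t nt z; apply/loc_eq0P; exists u; split=> // Pu.
  apply/z_neq0/locm_eq0P; exists (1 - u); split; last by rewrite /= scalerBl scale1r uz subrr.
  by move=> P1u; apply: notP1; rewrite -(subrK u 1); apply: PD.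
split; first by case/loc_eq0P => u [nu]; rewrite mulr1 => u0; apply: nu; rewrite u0.
move=> [x1 x2] [y1 y2] _ _ /loc_eq0P [u [nu /= uxy]].
have nnu : ~ nilradical u by move=> nilu; apply/nu/(nil_in_prime Pprime).
have : nilradical (u * (x1 * y1)) by rewrite uxy; apply: nil0.
case/(nilM_or nil_prime) => // /(nilM_or nil_prime) [nx | ny].
  by left; apply: nil_eq0.
by right; apply: nil_eq0.
Qed.

Lemma nil_ann_comax_of_loc_domain :
  (forall P : A -> Prop, in_Supp E P -> loc_is_domain P) -> nil_ann_comax.
Proof.
move=> locdom a na x.
pose I z := exists p q, z = p + q /\ p * a = 0 /\ q *: x = 0.
have [[p [q [e1 [pa qx]]]] | notI1] := classic (I 1).
  exists p; split=> //; have -> : p = 1 - q by rewrite e1 addrK.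
  by rewrite scalerBl scale1r qx subr0.
exfalso; have I_proper : proper_ideal I.
  split=> //; first by exists 0, 0; rewrite addr0 mul0r scale0r.
    move=> _ _ [p [q [-> [pa qx]]]] [p' [q' [-> [pa' qx']]]].
    exists (p + p'), (q + q'); rewrite addrACA mulrDl pa pa' addr0.
    by rewrite scalerDl qx qx' addr0.
  move=> r _ [p [q [-> [pa qx]]]]; exists (r * p), (r * q).
  by rewrite mulrDr -mulrA pa mulr0 -scalerA qx scaler0.
have [P [Pprime IP]] := prime_ideal_above I_proper.
have notP1 : ~ P 1 by case: Pprime.
have /(loc_domain_nil_eq0 notP1) /(_ na) /loc_eq0P [u [nu /= ua]] : loc_is_domain P.
  apply: locdom; split=> //; exists (x, 1); split=> // /locm_eq0P [u [nu ux]].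
  by apply/nu/IP; exists 0, u; rewrite add0r mul0r.
by apply/nu/IP; exists u, 0; rewrite addr0 scale0r.
Qed.

End AnnihilatorCondition.

Definition ord_cons (T : Type) n (y : T) (x : 'I_n -> T) (j : 'I_n.+1) : T :=
  if unlift ord0 j is Some j' then x j' else y.

Lemma ord_cons0 (T : Type) n (y : T) (x : 'I_n -> T) : ord_cons y x ord0 = y.
Proof. by rewrite /ord_cons unlift_none. Qed.

Lemma ord_cons_lift (T : Type) n (y : T) (x : 'I_n -> T) j : ord_cons y x (lift ord0 j) = x j.
Proof. by rewrite /ord_cons liftK. Qed.

Lemma bezout_pairs_family (A : comNzRingType) : bezout_pairs A ->
  forall m (c : 'I_m -> A), exists (d : A) (w g : 'I_m -> A),
    d = \sum_i w i * c i /\ forall i, c i = g i * d.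
Proof.
move=> bezA; elim=> [|m IHm] c.
  by exists 0, (fun _ => 0), (fun _ => 0); split; [rewrite big_ord0 | case].
have [d' [w' [g' [def_d' cg']]]] := IHm (fun i => c (lift ord0 i)).
have [d [[u [v ->]] [[p ep] [q eq]]]] := bezA (c ord0) d'.
exists (u * c ord0 + v * d'), (ord_cons u (fun j => v * w' j)),
  (ord_cons p (fun j => g' j * q)); split.
  rewrite big_ord_recl ord_cons0 def_d' mulr_sumr; congr (_ + _).
  by apply: eq_bigr => j _; rewrite ord_cons_lift mulrA.
move=> i; have [j ->|->] := unliftP ord0 i; last by rewrite ord_cons0.
by rewrite ord_cons_lift cg' -mulrA -eq.
Qed.

Section FPInjectivity.
Variables (A : comNzRingType) (E : lmodType A).
Hypothesis nil_prime : prime_ideal (@nilradical A).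

Definition respects_relations m n (K : 'I_m -> 'I_n -> A) (e : 'I_m -> E) : Prop :=
  forall c : 'I_m -> A, (forall j, \sum_i c i * K i j = 0) -> \sum_i c i *: e i = 0.

Definition solves m n (K : 'I_m -> 'I_n -> A) (e : 'I_m -> E) (x : 'I_n -> E) : Prop :=
  forall i, \sum_j K i j *: x j = e i.

Lemma sum_scale_ord_cons n (k : 'I_n.+1 -> A) (y : E) (x : 'I_n -> E) :
  \sum_j k j *: ord_cons y x j = k ord0 *: y + \sum_j k (lift ord0 j) *: x j.
Proof.
by rewrite big_ord_recl ord_cons0; under eq_bigr => j _ do rewrite ord_cons_lift.
Qed.

Lemma nil_sum m (F : 'I_m -> A) : (forall i, nilradical (F i)) -> nilradical (\sum_i F i).
Proof. by move=> nF; apply: big_ind => //; [apply: nil0 | apply: nilD]. Qed.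

Lemma respects_drop_nil_column m n (K : 'I_m -> 'I_n.+1 -> A) (e : 'I_m -> E) :
  nil_ann_comax E -> (forall i, nilradical (K i ord0)) -> respects_relations K e ->
  respects_relations (fun i j => K i (lift ord0 j)) e.
Proof.
move=> comax nilK0 hK c hc.
have nil_c0 : nilradical (\sum_i c i * K i ord0) by apply: nil_sum => i; apply: nilMl.
have [s [s_c0 se]] := nil_ann_comax_family comax nil_c0 e.
have <- : \sum_i (s * c i) *: e i = \sum_i c i *: e i.
  by apply: eq_bigr => i _; rewrite mulrC -scalerA se.
apply: hK => j; under eq_bigr => i _ do rewrite -mulrA; rewrite -mulr_sumr.
by have [j' ->|->] := unliftP ord0 j; rewrite ?hc ?mulr0.
Qed.

Section ColumnReduction.
Variables (m n : nat) (K : 'I_m -> 'I_n.+1 -> A) (e : 'I_m -> E) (d : A) (w g : 'I_m -> A).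
Hypotheses (def_d : d = \sum_i w i * K i ord0) (K0g : forall i, K i ord0 = g i * d).

Definition comb_row j := \sum_i w i * K i j.
Definition comb_rhs := \sum_i w i *: e i.

(* Subtracting [g i] times the combined row, whose first entry is [d], from row [i]
   clears the first column. *)
Definition reduced_matrix i j := K i (lift ord0 j) - g i * comb_row (lift ord0 j).
Definition reduced_rhs i := e i - g i *: comb_rhs.

Lemma respects_reduced : respects_relations K e ->
  respects_relations reduced_matrix reduced_rhs.
Proof.
move=> hK c hc; pose tau := \sum_l c l * g l.
have c_rest j : \sum_i c i * K i (lift ord0 j) = tau * comb_row (lift ord0 j).
  move: (hc j); under eq_bigr => i _ do rewrite mulrBr.
  rewrite sumrB => /eqP; rewrite subr_eq0 => /eqP ->.
  by rewrite /tau mulr_suml; apply: eq_bigr => i _; rewrite mulrA.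
have c_tau : \sum_i (c i - tau * w i) *: e i = 0.
  apply: hK => j; under eq_bigr => i _ do rewrite mulrBl -mulrA.
  rewrite sumrB -mulr_sumr -/(comb_row j).
  have [j' ->|->] := unliftP ord0 j; first by rewrite c_rest subrr.
  rewrite /comb_row -def_d /tau mulr_suml; apply/eqP; rewrite subr_eq0; apply/eqP.
  by apply: eq_bigr => i _; rewrite K0g mulrA.
rewrite -[RHS]c_tau /reduced_rhs.
under eq_bigr => i _ do rewrite scalerBr scalerA.
under [in RHS]eq_bigr => i _ do rewrite scalerBl -scalerA.
by rewrite !sumrB -scaler_suml -/tau /comb_rhs scaler_sumr.
Qed.

Lemma solves_reduced (x : 'I_n -> E) (y : E) :
  solves reduced_matrix reduced_rhs x ->
  d *: y = comb_rhs - \sum_j comb_row (lift ord0 j) *: x j ->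
  solves K e (ord_cons y x).
Proof.
move=> sol dy i; rewrite sum_scale_ord_cons.
have -> : \sum_j K i (lift ord0 j) *: x j =
    \sum_j reduced_matrix i j *: x j + g i *: \sum_j comb_row (lift ord0 j) *: x j.
  rewrite scaler_sumr -big_split; apply: eq_bigr => j _.
  by rewrite /= scalerA -scalerDl /reduced_matrix subrK.
rewrite sol /reduced_rhs K0g -scalerA dy scalerBr.
by rewrite addrACA addNr addr0 addrC subrK.
Qed.

End ColumnReduction.

Lemma solvable_of_respects : bezout_pairs A -> nil_ann_comax E -> nonnil_divisible E ->
  forall n m (K : 'I_m -> 'I_n -> A) (e : 'I_m -> E),
    respects_relations K e -> exists x, solves K e x.
Proof.
move=> bezA comax divE; elim=> [|n IHn] m K e hK.
  exists (fun _ => 0) => i; rewrite big_ord0.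
  have : \sum_k (k == i)%:R *: e k = 0 by apply: hK => -[].
  rewrite (bigD1 i) //= eqxx scale1r big1 ?addr0 // => k /negbTE ->.
  by rewrite scale0r.
have [[i0 nK0] | all_nil] := classic (exists i, ~ nilradical (K i ord0)); last first.
  have nilK0 i : nilradical (K i ord0) by apply: NNPP => nK0; apply: all_nil; exists i.
  have [x sol] := IHn m _ e (respects_drop_nil_column comax nilK0 hK).
  by exists (ord_cons 0 x) => i; rewrite sum_scale_ord_cons scaler0 add0r.
have [d [w [g [def_d K0g]]]] := bezout_pairs_family bezA (fun i => K i ord0).
have nd : ~ nilradical d by move=> nd; apply: nK0; rewrite K0g; apply: nilMl.
have [x sol] := IHn m _ _ (respects_reduced def_d K0g hK).
have [y dy] := divE d nd (comb_rhs e w - \sum_j comb_row K w (lift ord0 j) *: x j).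
have sol_cons := solves_reduced K0g sol (esym dy).
by exists (ord_cons y x).
Qed.

Lemma FP_injective_of_nonnil_divisible :
  bezout_pairs A -> nil_ann_comax E -> nonnil_divisible E -> FP_injective E.
Proof. by move=> bezA comax divE m n K; apply: solvable_of_respects. Qed.

Lemma nonnil_divisible_of_FP_injective :
  FP_injective E -> nil_ann_comax E -> nonnil_divisible E.
Proof.
move=> fpiE comax d nd x.
have [c | y sol] := fpiE 1%N 1%N (\matrix_(i, j) d) (fun _ => x).
  move/(_ ord0); rewrite big_ord1 mxE => cd.
  have nc : nilradical (c ord0).
    by have [] // := nilM_or nil_prime (_ : nilradical (c ord0 * d)); rewrite cd; apply: nil0.
  by rewrite big_ord1 (nil_scale0 comax nc).
by exists (y ord0); have := sol ord0; rewrite big_ord1 mxE.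
Qed.

End FPInjectivity.

Section BezoutTrivialExtension.
Variables (A : comNzRingType) (E : lmodType A).
Local Notation R := (triv_ext E).
Hypotheses (nil_prime : prime_ideal (@nilradical A)) (bezR : bezout_pairs R).

Lemma bezout_pairs_base : bezout_pairs A.
Proof.
move=> a b.
have [[d1 d2] [[[u1 u2] [[v1 v2] eD]] [[[p1 p2] eP] [[q1 q2] eQ]]]] := bezR (a, 0) (b, 0).
move: eD eP eQ; rewrite teD !teM /= => -[ed _] [ep _] [eq _].
by exists d1; split; [exists u1, v1 | split; [exists p1 | exists q1]].
Qed.

Lemma pairs_cyclic_module : pairs_cyclic E.
Proof.
move=> e f.
have [[d1 d2] [[[u1 u2] [[v1 v2] eD]] [[[p1 p2] eP] [[q1 q2] eQ]]]] := bezR (0, e) (0, f).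
move: eD eP eQ; rewrite teD !teM /= => -[ed1 ed2] [_ ep2] [_ eq2].
rewrite !mulr0 addr0 in ed1; subst d1.
exists d2; split; last split.
- by exists u1, v1; rewrite ed2 !scale0r !addr0.
- by exists p1; rewrite ep2 scale0r addr0.
- by exists q1; rewrite eq2 scale0r addr0.
Qed.

(* A gcd (u1 a, a u2 + v1 x) of (a, 0) and (0, x) in R, with cofactors (p1, p2) and (q1, q2). *)
Lemma te_gcd_scalar_vector (a : A) (x : E) : exists u1 u2 v1 p1 p2 q1 q2,
  [/\ a = p1 * (u1 * a), p1 *: (a *: u2 + v1 *: x) + (u1 * a) *: p2 = 0,
      q1 * (u1 * a) = 0 & x = q1 *: (a *: u2 + v1 *: x) + (u1 * a) *: q2].
Proof.
have [[d1 d2] [[[u1 u2] [[v1 v2] eD]] [[[p1 p2] eP] [[q1 q2] eQ]]]] := bezR (a, 0) (0, x).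
move: eD eP eQ; rewrite teD !teM /= => -[ed1 ed2] [ep1 ep2] [eq1 eq2].
rewrite mulr0 addr0 in ed1; rewrite scaler0 add0r scale0r addr0 in ed2; subst d1 d2.
by exists u1, u2, v1, p1, p2, q1, q2.
Qed.

Lemma scale_in_square (a : A) (x : E) : exists y, a *: x = (a * a) *: y.
Proof.
have [u1 [u2 [v1 [p1 [p2 [q1 [q2 [ea _ q1ua0 ex]]]]]]]] := te_gcd_scalar_vector a x.
have aq1 : a * q1 = 0 by rewrite ea -mulrA (mulrC _ q1) q1ua0 mulr0.
exists (u1 *: q2); rewrite {1}ex scalerDr !scalerA aq1 scale0r add0r.
by congr (_ *: _); ring.
Qed.

Lemma nil_scale0_te (a : A) : nilradical a -> forall x : E, a *: x = 0.
Proof.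
move=> [n an] x; suff [y ->] : exists y, a *: x = a ^+ n.+1 *: y.
  by rewrite exprSr an mul0r scale0r.
elim: n {an} x => [|n IHn] x; first by exists x; rewrite expr1.
have [y ->] := scale_in_square a x; have [z az] := IHn y.
by exists z; rewrite -scalerA az scalerA -exprS.
Qed.

Lemma nil_ann_comax_te : nil_ann_comax E.
Proof.
move=> a na x.
have [u1 [u2 [v1 [p1 [p2 [q1 [q2 [ea e0 _ ex]]]]]]]] := te_gcd_scalar_vector a x.
have nua : nilradical (u1 * a) by apply: nilMl.
rewrite (nil_scale0_te na) add0r !(nil_scale0_te nua) addr0 in e0 ex.
exists (1 - p1 * u1); split; first by rewrite mulrBl mul1r -mulrA -ea subrr.
have pu0 : (p1 * u1) *: x = 0.
  rewrite ex addr0 !scalerA (_ : _ * _ * _ * _ = u1 * q1 * (p1 * v1)); last by ring.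
  by rewrite -scalerA -[(p1 * v1) *: x]scalerA e0 scaler0.
by rewrite scalerBl scale1r pu0 subr0.
Qed.

Lemma nonnil_divisible_te : nonnil_divisible E.
Proof.
move=> d nd x.
have [u1 [u2 [v1 [p1 [p2 [q1 [q2 [ed _ q1ud0 ex]]]]]]]] := te_gcd_scalar_vector d x.
have nt : nilradical (1 - p1 * u1).
  have : nilradical ((1 - p1 * u1) * d).
    by rewrite mulrBl mul1r -mulrA -ed subrr; apply: nil0.
  by case/(nilM_or nil_prime).
have nu1 : ~ nilradical u1.
  move=> nu1; apply: (@nil1 A); rewrite -(subrK (p1 * u1) 1).
  by apply: (nilD nil_prime) => //; apply: nilMl.
have nq1 : nilradical q1.
  have : nilradical (q1 * u1 * d) by rewrite -mulrA q1ud0; apply: nil0.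
  by do 2![case/(nilM_or nil_prime) => //].
by exists (u1 *: q2); rewrite {1}ex (nil_scale0_te nq1) add0r scalerA mulrC.
Qed.

End BezoutTrivialExtension.

Section TrivialExtensionBezout.
Variables (A : comNzRingType) (E : lmodType A).
Local Notation R := (triv_ext E).
Hypotheses (comax : nil_ann_comax E) (divE : nonnil_divisible E).

Lemma te_principal_pair_nonnil (a b d u v p q : A) (e f : E) :
  ~ nilradical d -> d = u * a + v * b -> a = p * d -> b = q * d ->
  principal_pair ((a, e) : R) (b, f).
Proof.
move=> nd ed ea eb.
have [w ew] := divE nd (- (u *: e + v *: f)).
have [we ewe] := divE nd e.
have [wf ewf] := divE nd f.
exists (d, 0); split; last split.
- exists (u, u *: w), (v, v *: w); rewrite teD !teM /= -ed; congr pair.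
  by rewrite !scalerA (mulrC a) (mulrC b) addrACA -scalerDl -ed -ew subrr.
- by exists (p, we); rewrite teM /= scaler0 add0r -ea -ewe.
- by exists (q, wf); rewrite teM /= scaler0 add0r -eb -ewf.
Qed.

Hypothesis cycE : pairs_cyclic E.

Lemma te_principal_pair_nil (a b d u v p q : A) (e f : E) :
  nilradical a -> nilradical b -> d = u * a + v * b -> a = p * d -> b = q * d ->
  principal_pair ((a, e) : R) (b, f).
Proof.
move=> na nb ed ea eb.
have [g [[p' [q' eg]] [[la ela] [mu emu]]]] := cycE e f.
have [s1 [s1a s1g]] := comax na g.
have [s2 [s2b s2g]] := comax nb g.
have [s [sa sb sg]] : exists s, [/\ s * a = 0, s * b = 0 & s *: g = g].
  exists (s1 * s2); split; first by rewrite mulrAC s1a mul0r.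
    by rewrite -mulrA s2b mulr0.
  by rewrite -scalerA s2g s1g.
have sd : s * d = 0.
  have -> : s * d = u * (s * a) + v * (s * b) by rewrite ed; ring.
  by rewrite sa sb !mulr0 addr0.
have se : s *: e = e by rewrite ela scalerA mulrC -scalerA sg.
have sf : s *: f = f by rewrite emu scalerA mulrC -scalerA sg.
have mixA c c' z : s * z = 0 -> (c * s + c' * (1 - s)) * z = c' * z.
  move=> sz; have -> : (c * s + c' * (1 - s)) * z = c * (s * z) + c' * z - c' * (s * z).
    by ring.
  by rewrite sz !mulr0 add0r subr0.
have mixE c c' (y : E) : s *: y = y -> (c * s + c' * (1 - s)) *: y = c *: y.
  by move=> sy; rewrite scalerDl -!scalerA sy scalerBl scale1r sy subrr scaler0 addr0.
exists (d, g); split; last split.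
- exists (p' * s + u * (1 - s), 0), (q' * s + v * (1 - s), 0).
  by rewrite teD !teM /= !scaler0 !addr0 !mixA // !mixE // -ed -eg.
- exists (la * s + p * (1 - s), 0).
  by rewrite teM /= scaler0 addr0 mixA // mixE // -ea -ela.
- exists (mu * s + q * (1 - s), 0).
  by rewrite teM /= scaler0 addr0 mixA // mixE // -eb -emu.
Qed.

Lemma bezout_pairs_te : bezout_pairs A -> bezout_pairs R.
Proof.
move=> bezA [a e] [b f]; have [d [[u [v ed]] [[p ea] [q eb]]]] := bezA a b.
have [[na nb] | /not_and_or nab] := classic (nilradical a /\ nilradical b).
  exact: te_principal_pair_nil na nb ed ea eb.
have nd : ~ nilradical d.
  by move=> nd; case: nab; apply; [rewrite ea | rewrite eb]; apply: nilMl.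
exact: te_principal_pair_nonnil nd ed ea eb.
Qed.

End TrivialExtensionBezout.

Theorem proposition3p1 (A : comNzRingType) (E : lmodType A) :
  prime_ideal (@nilradical A) ->
  (exists e : E, e != 0) ->
  [<-> Hermite (triv_ext E);
       Bezout (triv_ext E);
       [/\ Bezout A,
           (forall P : A -> Prop, in_Supp E P -> loc_is_domain P),
           FP_injective E &
           fg_submods_cyclic E]].
Proof.
move=> nil_prime _; tfae.
- by move=> /bezout_pairs_of_Hermite /BezoutP.
- move=> /BezoutP bezR; have comax := nil_ann_comax_te bezR.
  have divE := nonnil_divisible_te nil_prime bezR.
  split.
  + exact/BezoutP/bezout_pairs_base.
  + by move=> P; apply: loc_domain_of_nil_ann_comax.
  + exact: FP_injective_of_nonnil_divisible (bezout_pairs_base bezR) comax divE.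
  + exact/fg_submods_cyclicP/pairs_cyclic_module.
- case=> /BezoutP bezA locdom fpiE /fg_submods_cyclicP cycE.
  have comax := nil_ann_comax_of_loc_domain locdom.
  have divE := nonnil_divisible_of_FP_injective nil_prime fpiE comax.
  apply: Hermite_of_bezout_pairs; first exact: prime_nil_te.
  exact: bezout_pairs_te comax divE cycE bezA.
Qed.
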